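(* Let $\phi$ be a Pogorelov solution. Then its Legendre–Fenchel dual $\phi^*(x)=\sup_{y\in B(0,1)}\{x\cdot y-\phi(y)\}$ is an Aleksandrov solution of the Monge–Ampère problem $\det(D^2u)=\mu$ in $\mathbb{R}^2$, $\partial u(\mathbb{R}^2)\subset B(0,1)$.
   Context: Let $K\ge 1$, $d_1,\dots,d_K\in\mathbb{R}^2$, $\alpha_1,\dots,\alpha_K>0$ with $\sum_k\alpha_k=\pi=|B(0,1)|$, where $B(0,1)$ is the unit ball of $\mathbb{R}^2$ and $|\cdot|$ is Lebesgue measure; let $\mu=\sum_{k=1}^K\alpha_k\delta_{d_k}$. Subgradient of a convex $u$: $\partial u(x)=\{p: u(z)\ge u(x)+p\cdot(z-x)\ \forall z\}$ and $\partial u(E)=\bigcup_{x\in E}\partial u(x)$. An Aleksandrov solution is a convex function $u$ with $\partial u(\mathbb{R}^2)\subset B(0,1)$ and $|\partial u(E)|=\mu(E)$ for every measurable $E\subset\mathbb{R}^2$. A Pogorelov solution is a function $\phi(y)=\max_{k}\{y\cdot d_k-v_k\}$ on $B(0,1)$ (extended by $+\infty$ outside $B(0,1)$), for some reals $v_1,\dots,v_K$, such that $|C_k|=\alpha_k$ for every $k$, where $C_k=\{y\in B(0,1):\phi$ is differentiable at $y$ and $\nabla\phi(y)=d_k\}$. *)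

From HB Require Import structures.
From mathcomp Require Import all_boot all_order all_algebra.
From mathcomp Require Import all_classical all_reals all_analysis.
Set Implicit Arguments. Unset Strict Implicit. Unset Printing Implicit Defensive.
Import Order.TTheory GRing.Theory Num.Theory.
Import numFieldNormedType.Exports.
Local Open Scope classical_set_scope.
Local Open Scope ring_scope.

Section Defs.
Context {R : realType}.
Implicit Types (x y p z : R * R).

Definition dot x y : R := x.1 * y.1 + x.2 * y.2.

(* the closed unit ball B(0,1) (it must be closed) *)
Definition ball01 : set (R * R) := [set y | y.1 ^+ 2 + y.2 ^+ 2 <= 1].

Definition leb2 : set (R * R) -> \bar R :=
  (@lebesgue_measure R \x @lebesgue_measure R)%E.

(* Lebesgue measurability (completion) together with the value of the
   Lebesgue measure: S is Lebesgue-measurable with |S| = m *)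
Definition leb2_measure_is (S : set (R * R)) (m : \bar R) : Prop :=
  exists F G : set (R * R),
    [/\ measurable F, measurable G, F `<=` S /\ S `<=` G,
        leb2 (G `\` F) = 0%E & leb2 F = m].

Definition mu_disc (K : nat) (d : 'I_K -> R * R) (alpha : 'I_K -> R)
  (E : set (R * R)) : \bar R :=
  (\sum_(k < K) ((alpha k)%:E * \d_(d k) E))%E.

Definition convex2 (u : R * R -> R) : Prop :=
  forall x z (t : R), 0 <= t <= 1 ->
    u ((1 - t) * x.1 + t * z.1, (1 - t) * x.2 + t * z.2)
      <= (1 - t) * u x + t * u z.

Definition subgrad (u : R * R -> R) x : set (R * R) :=
  [set p | forall z, u z >= u x + dot p (z.1 - x.1, z.2 - x.2)].

Definition subgrad_img (u : R * R -> R) (E : set (R * R)) : set (R * R) :=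
  \bigcup_(x in E) subgrad u x.

Definition aleksandrov_solution (K : nat) (d : 'I_K -> R * R)
  (alpha : 'I_K -> R) (u : R * R -> R) : Prop :=
  [/\ convex2 u,
      subgrad_img u setT `<=` ball01 &
      forall E : set (R * R), measurable E ->
        leb2_measure_is (subgrad_img u E) (mu_disc d alpha E)].

(* the finite part of phi(y) = max_k { y.d_k - v_k } (K >= 1) *)
Definition pog_max (K : nat) (d : 'I_K -> R * R) (v : 'I_K -> R) y : R :=
  fine (\big[Order.max/-oo%E]_(k < K) (dot y (d k) - v k)%:E).

(* C_k: points of B(0,1) where phi (= pog_max on B(0,1), +oo outside) is
   differentiable with gradient d_k.  Differentiability of the extended
   function phi at y requires phi finite near y, i.e. y interior to B(0,1),
   and then phi coincides with pog_max near y. *)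
Definition pog_cell (K : nat) (d : 'I_K -> R * R) (v : 'I_K -> R)
  (k : 'I_K) : set (R * R) :=
  [set y | ball01 y /\ (\forall z \near y, ball01 z) /\
     differentiable (pog_max d v) y /\
     (forall h, 'd (pog_max d v) y h = dot h (d k))].

Definition pogorelov_solution (K : nat) (d : 'I_K -> R * R)
  (alpha : 'I_K -> R) (v : 'I_K -> R) : Prop :=
  forall k : 'I_K, leb2_measure_is (pog_cell d v k) (alpha k)%:E.

Definition legendre_dual (K : nat) (d : 'I_K -> R * R) (v : 'I_K -> R)
  x : R :=
  sup [set dot x y - pog_max d v y | y in ball01].

End Defs.

From HB Require Import structures.
From mathcomp Require Import all_boot all_order all_algebra.
From mathcomp Require Import all_classical all_reals all_analysis.
From mathcomp Require Import ring lra.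
Import Order.TTheory GRing.Theory Num.Theory.
Import numFieldNormedType.Exports.
Local Open Scope classical_set_scope.
Local Open Scope ring_scope.

(* The dual u = phi^* is a supremum of affine functions, hence convex, and
   u (x + p) <= u x + (|p|^2 + 1) / 2 forces every subgradient p of u into the
   closed unit ball.  On the cell C_k, phi is differentiable with gradient d_k,
   which yields the Fenchel equality u (d_k) = d_k . y - phi y; therefore
   C_k lies in the subdifferential of u at d_k, and a point y of C_k is a
   subgradient of u at no other point.  Outside the unit circle and the lines
   on which two affine pieces of phi with distinct gradients tie, every point of
   the ball lies in some cell, so the image of E under the subdifferential of u
   is the union of the cells C_k with d_k in E up to a null set.  Since the
   cells have total area pi, the area of the disk, no two directions d_k
   coincide, and the measure of that union is mu(E). *)

(* [leb2] carries no measure structure of its own; lemmas about contents are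
   applied to this unfolded form. *)
Local Notation leb2_measure R := (@lebesgue_measure R \x @lebesgue_measure R)%E.

Section differential.
Context {R : realFieldType} {V : normedModType R}.

Lemma near_affine_differentiable {f : V -> R} {l : {linear V -> R}} {c : R} {y : V} :
  continuous l -> (\forall z \near y, f z = l z + c) ->
  differentiable f y /\ forall h, 'd f y h = l h.
Proof.
move=> cl near_fl.
have fy : f y = l y + c by exact: nbhs_singleton near_fl.
have expand : f \o shift y = cst (f y) + l +o_ (0 : V) id.
  apply/eqaddoP => e e0.
  have : \forall x \near (0 : V), f (x + y) = l (x + y) + c.
    have shift0 : x + y @[x --> (0 : V)] --> y.
      by rewrite -[X in _ --> X]add0r; apply: cvgD; [exact: cvg_id|exact: cvg_cst].
    exact: shift0 _ near_fl.
  apply: filterS => x fxy.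
  have -> : (f \o shift y - (cst (f y) + l)) x = f (x + y) - (f y + l x) by [].
  rewrite fxy fy linearD.
  have -> : l x + l y + c - (l y + c + l x) = 0 by ring.
  by rewrite normr0 mulr_ge0 // ltW.
have dfl := diff_unique cl expand.
split; last by move=> h; rewrite dfl.
by apply/diff_locallyP; rewrite dfl.
Qed.

Lemma right_slope_le_diff (f : V -> R) (y w : V) (c : R) : differentiable f y ->
  (\forall t \near 0^'+, f y + t * c <= f (t *: w + y)) -> c <= 'd f y w.
Proof.
move=> df slope.
have right0 : (0 : R)^'+ `=>` (0 : R)^'.
  by apply: within_subset => t /= t0; exact: lt0r_neq0.
have quot := cvg_trans (cvg_app (fun h => h^-1 *: ((f \o shift y) (h *: w) - f y)) right0)
  (diff_derivable (v := w) df).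
rewrite -deriveE //; apply: (ler_cvg_to (cvg_cst c) quot).
near=> t.
have t0 : 0 < t by near: t; exact: nbhs_right_gt.
have slope_t : f y + t * c <= f (t *: w + y) by near: t; exact: slope.
rewrite /= -[c](mulKf (lt0r_neq0 t0)) [_ *: _]/(_ * _).
by apply: ler_wpM2l; [rewrite invr_ge0 ltW | lra].
Unshelve. all: by end_near.
Qed.

End differential.

Section dot_product.
Context {R : realType}.
Implicit Types (x y z p q : R * R).

Lemma dotC x y : dot x y = dot y x.
Proof. by rewrite /dot mulrC [x.2 * _]mulrC. Qed.

Lemma dotDZl (t : R) x y z : dot (t *: x + y) z = t * dot x z + dot y z.
Proof.
case: x y => x1 x2 [y1 y2]; rewrite /dot /=.
change ((t * x1 + y1) * z.1 + (t * x2 + y2) * z.2 =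
  t * (x1 * z.1 + x2 * z.2) + (y1 * z.1 + y2 * z.2)); ring.
Qed.

Definition dotl q x : R := dot x q.

Lemma dotl_is_linear q : linear (dotl q).
Proof. by move=> t x y; rewrite /dotl dotDZl. Qed.

HB.instance Definition _ q :=
  GRing.isLinear.Build R (R * R)%type R *:%R (dotl q) (dotl_is_linear q).

Lemma continuous_dotl q : continuous (dotl q).
Proof. by move=> y; apply: cvgD; apply: cvgMl; [exact: cvg_fst|exact: cvg_snd]. Qed.

Lemma measurable_dotl q : measurable_fun setT (dotl q).
Proof.
by apply: measurable_realfun.measurable_funD; apply: measurable_realfun.measurable_funM;
  (exact: measurable_fst || exact: measurable_snd || exact: measurable_cst).
Qed.

Lemma dot_le_sumsq x y : dot x y <= (x.1 ^+ 2 + x.2 ^+ 2 + y.1 ^+ 2 + y.2 ^+ 2) / 2.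
Proof. by have := sqr_ge0 (x.1 - y.1); have := sqr_ge0 (x.2 - y.2); rewrite /dot; nra. Qed.

Lemma dot_le_eq p q : (forall w, dot p w <= dot w q) -> p = q.
Proof.
move=> le_pq; have := le_pq (p.1 - q.1, p.2 - q.2); rewrite /dot /= => h.
have := sqr_ge0 (p.1 - q.1); have := sqr_ge0 (p.2 - q.2) => h2 h1.
have e1 : p.1 = q.1 by apply/eqP; rewrite -subr_eq0 -sqrf_eq0; apply/eqP; nra.
have e2 : p.2 = q.2 by apply/eqP; rewrite -subr_eq0 -sqrf_eq0; apply/eqP; nra.
by case: p q e1 e2 {le_pq h h1 h2} => p1 p2 [q1 q2] /= -> ->.
Qed.

End dot_product.

Lemma in_bigsetU (T : Type) (I : finType) (P : pred I) (A : I -> set T) (y : T) :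
  (\big[setU/set0]_(i | P i) A i) y <-> exists2 i, P i & A i y.
Proof.
rewrite -bigcup_seq_cond; split => [[i /andP[_ Pi] Aiy]|[i Pi Aiy]]; first by exists i.
by exists i => //=; rewrite mem_index_enum.
Qed.

Lemma bigsetUS {T I : Type} {s : seq I} {P : pred I} {A B : I -> set T} :
  (forall i, P i -> A i `<=` B i) ->
  \big[setU/set0]_(i <- s | P i) A i `<=` \big[setU/set0]_(i <- s | P i) B i.
Proof.
move=> AB; apply: (big_ind2 (fun X Y : set T => X `<=` Y)) => //.
by move=> ? ? ? ?; exact: setUSS.
Qed.

(* [leb2_measure_is] is [completion_measure_is leb2]. *)
Definition completion_measure_is {d} {T : semiRingOfSetsType d} {R : realFieldType}
  (mu : set T -> \bar R) (S : set T) (m : \bar R) : Prop :=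
  exists F G : set T,
    [/\ measurable F, measurable G, F `<=` S /\ S `<=` G,
        mu (G `\` F) = 0%E & mu F = m].

Section completion_measure.
Context {d} {T : ringOfSetsType d} {R : realFieldType} (mu : {content set T -> \bar R}).
Local Open Scope ereal_scope.

Lemma le_measure_bigsetU {I : Type} {s : seq I} {P : pred I} {F : I -> set T} :
  (forall i, P i -> measurable (F i)) ->
  mu (\big[setU/set0]_(i <- s | P i) F i) <= \sum_(i <- s | P i) mu (F i).
Proof.
move=> mF; elim: s => [|i s IH]; first by rewrite !big_nil measure0.
rewrite !big_cons; case: ifP => // Pi.
apply: le_trans; first exact: (measureU2 mu (mF i Pi) (bigsetU_measurable _ mF)).
by rewrite leeD2l.
Qed.

Lemma completion_measure_is_sup {S m} : completion_measure_is mu S m ->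
  exists G, [/\ measurable G, S `<=` G & mu G = m].
Proof.
move=> [F [G [mF mG [FS SG] GF0 <-]]]; exists G; split => //.
rewrite -(setDUK (subset_trans FS SG)) measureU ?setDIK //; last exact: measurableD.
by rewrite GF0 adde0.
Qed.

Lemma completion_measure_is_bigsetU_le {n} (P : {pred 'I_n}) {S : 'I_n -> set T}
    {m : 'I_n -> \bar R} :
  (forall k, completion_measure_is mu (S k) (m k)) ->
  exists2 G, measurable G /\ \big[setU/set0]_(k < n | P k) S k `<=` G &
    mu G <= \sum_(k < n | P k) m k.
Proof.
move=> Sm; have [G SG] := choice (fun k => completion_measure_is_sup (Sm k)).
have mG k : measurable (G k) by case: (SG k).
have mGU : measurable (\big[setU/set0]_(k < n | P k) G k).
  by apply: bigsetU_measurable => k _; exact: mG.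
exists (\big[setU/set0]_(k < n | P k) G k).
  by split=> //; apply: bigsetUS => k _; case: (SG k).
apply: le_trans; first exact: (le_measure_bigsetU (fun k _ => mG k)).
by apply: lee_sum => k _; case: (SG k) => _ _ ->.
Qed.

Lemma completion_measure_is_negligible_ext {S S' N m} :
  completion_measure_is mu S m -> mu.-negligible N ->
  S `<=` S' -> S' `<=` S `|` N -> completion_measure_is mu S' m.
Proof.
move=> [F [G [mF mG [FS SG] GF0 Fm]]] [N' [mN' N'0 NN']] SS' S'SN.
exists F, (G `|` N'); split => //; first exact: measurableU.
  split; first exact: subset_trans SS'.
  by move=> x /S'SN [/SG|/NN']; [left|right].
apply/eqP; rewrite -measure_le0 setDUl.
apply: le_trans; first exact: (measureU2 mu (measurableD mG mF) (measurableD mN' mF)).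
rewrite GF0 add0e -N'0; apply: le_measure; rewrite ?inE //.
exact: measurableD.
Qed.

Lemma completion_measure_is_bigsetU {n} (P : {pred 'I_n}) {S : 'I_n -> set T}
    {m : 'I_n -> \bar R} :
  (forall k, completion_measure_is mu (S k) (m k)) -> trivIset P S ->
  completion_measure_is mu (\big[setU/set0]_(k < n | P k) S k)
    (\sum_(k < n | P k) m k).
Proof.
move=> Sm tS; have [F SmF] := choice Sm; have [G FG] := choice SmF.
have mF k : measurable (F k) by case: (FG k).
have mG k : measurable (G k) by case: (FG k).
have FS k : F k `<=` S k by case: (FG k) => _ _ [].
have SG k : S k `<=` G k by case: (FG k) => _ _ [].
exists (\big[setU/set0]_(k < n | P k) F k), (\big[setU/set0]_(k < n | P k) G k).
split; [exact: bigsetU_measurable|exact: bigsetU_measurable| | |].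
- by split; apply: bigsetUS => k _; [exact: FS|exact: SG].
- apply/eqP; rewrite -measure_le0.
  have GF : \big[setU/set0]_(k < n | P k) G k `\` \big[setU/set0]_(k < n | P k) F k
      `<=` \big[setU/set0]_(k < n | P k) (G k `\` F k).
    apply: (big_ind3 (fun A B C : set T => A `\` B `<=` C)) => //; last by move=> ? _ ?.
    by move=> A1 B1 C1 A2 B2 C2 h1 h2 x [[A1x|A2x] /not_orP[nB1 nB2]];
      [left; exact: h1|right; exact: h2].
  have mGF k : measurable (G k `\` F k) := measurableD (mG k) (mF k).
  apply: le_trans; first apply: (le_measure mu _ _ GF); rewrite ?inE.
  - by apply: measurableD; exact: bigsetU_measurable.
  - by apply: bigsetU_measurable => k _; exact: mGF.
  apply: le_trans; first exact: (le_measure_bigsetU (fun k _ => mGF k)).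
  by rewrite big1 // => k _; case: (FG k).
- rewrite measure_bigsetU_ord_cond //; last first.
    by move=> i j Pi Pj [x [/FS Six /FS Sjx]]; apply: tS => //; exists x.
  by apply: eq_bigr => k _; case: (FG k).
Qed.

End completion_measure.

Section plane_lebesgue.
Context {R : realType}.

Lemma measurable_dot_level (c : R * R) (e : R) : measurable [set y | dot y c = e].
Proof. by have := measurable_dotl c measurableT _ (measurable_set1 e); rewrite setTI. Qed.

Lemma measurable_sumsq : measurable_fun setT (fun y : R * R => y.1 ^+ 2 + y.2 ^+ 2).
Proof.
by apply: measurable_realfun.measurable_funD; apply: measurable_realfun.measurable_funX;
  [exact: measurable_fst|exact: measurable_snd].
Qed.

Lemma measurable_unit_circle : measurable [set y : R * R | y.1 ^+ 2 + y.2 ^+ 2 = 1].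
Proof. by have := measurable_sumsq measurableT _ (measurable_set1 1); rewrite setTI. Qed.

Lemma measurable_ball01 : measurable (@ball01 R).
Proof.
have := measurable_sumsq measurableT _ (measurable_itv `]-oo, 1]); rewrite setTI.
by congr measurable; apply/seteqP; split => y; rewrite /= in_itv.
Qed.

Lemma leb2_xsection0 (A : set (R * R)) :
  (forall x, lebesgue_measure (xsection A x) = 0) -> leb2 A = 0.
Proof. by move=> A0; apply: integral0_eq => x _; exact: A0. Qed.

Lemma leb2_dot_level (c : R * R) (e : R) : c != 0 -> leb2 [set y | dot y c = e] = 0.
Proof.
case: c => c1 c2 /= c0; have [c20|c20] := eqVneq c2 0.
  have c10 : c1 != 0 by apply: contra c0 => /eqP ->; rewrite c20.
  have -> : [set y | dot y (c1, c2) = e] = [set e / c1] `*` setT.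
    apply/seteqP; split => -[y1 y2]; rewrite /dot /= c20 mulr0 addr0.
      by move=> <- /=; split => //; rewrite mulfK.
    by move=> [/= -> _]; rewrite divfK.
  rewrite /leb2 product_measure1E; [|exact: measurable_set1|exact: measurableT].
  by rewrite [X in (X * _)%E](_ : _ = 0) ?mul0e //; exact: lebesgue_measure_set1.
apply: leb2_xsection0 => x.
suff -> : xsection [set y | dot y (c1, c2) = e] x = [set (e - x * c1) / c2].
  exact: lebesgue_measure_set1.
apply/seteqP; split => y; rewrite /xsection /dot /= inE /=.
  by move=> <-; rewrite addrC addKr mulfK.
by move=> ->; rewrite divfK // addrC subrK.
Qed.

Lemma leb2_unit_circle : leb2 [set y : R * R | y.1 ^+ 2 + y.2 ^+ 2 = 1] = 0.
Proof.
apply: leb2_xsection0 => x; set s := Num.sqrt (1 - x ^+ 2).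
have sec_sub : xsection [set y : R * R | y.1 ^+ 2 + y.2 ^+ 2 = 1] x `<=` [set s] `|` [set - s].
  move=> y; rewrite /xsection /= inE /= => h.
  have y2 : 1 - x ^+ 2 = y ^+ 2 by rewrite -h addrC addKr.
  by rewrite /s y2 sqrtr_sqr; case: (ler0P y) => _; [right; rewrite opprK|left].
apply/eqP; rewrite eq_le measure_ge0 andbT.
apply: le_trans; first apply: (le_measure lebesgue_measure _ _ sec_sub).
- by rewrite inE; apply: measurable_xsection; exact: measurable_unit_circle.
- by rewrite inE; apply: measurableU; exact: measurable_set1.
apply: le_trans; first by apply: measureU2; exact: measurable_set1.
rewrite [X in (X + _)%E](_ : _ = 0) ?[X in (_ + X)%E](_ : _ = 0) ?adde0 //;
  exact: lebesgue_measure_set1.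
Qed.

Lemma lebesgue_xsection_ball01 (x : R) :
  lebesgue_measure (xsection (@ball01 R) x) = (2 * Num.sqrt (1 - x ^+ 2))%:E.
Proof.
have [x1|x1] := leP (x ^+ 2) 1; last first.
  have -> : xsection (@ball01 R) x = set0.
    apply/seteqP; split => y //; rewrite /xsection /ball01 /= inE /= => h.
    by have := sqr_ge0 y; lra.
  by rewrite measure0 ltr0_sqrtr ?mulr0 //; lra.
set s := Num.sqrt (1 - x ^+ 2).
have -> : xsection (@ball01 R) x = [set` `[- s, s]].
  apply/seteqP; split => y; rewrite /xsection /ball01 /= inE /= in_itv /= -ler_norml;
    rewrite /s -sqrtr_sqr ler_sqrt; lra.
rewrite lebesgue_measure_itv /= lte_fin.
have s0 : 0 <= s := sqrtr_ge0 _.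
case: ltP => [_|s_le]; last by rewrite (_ : s = 0) ?mulr0 //; lra.
by rewrite -EFinD opprK mulr2n mulrDl mul1r.
Qed.

End plane_lebesgue.

Section disk_area.
Context {R : realType}.

Definition disk_primitive (x : R) : R := x * Num.sqrt (1 - x ^+ 2) + asin x.

Lemma is_derive_disk_primitive (x : R) : -1 < x < 1 ->
  is_derive x 1 disk_primitive (2 * Num.sqrt (1 - x ^+ 2)).
Proof.
move=> x11; have r_gt0 : 0 < 1 - x ^+ 2 by nra.
set s := Num.sqrt (1 - x ^+ 2).
have s_gt0 : 0 < s by rewrite sqrtr_gt0.
have s2 : s ^+ 2 = 1 - x ^+ 2 by rewrite sqr_sqrtr // ltW.
have d_radicand : is_derive x 1 (fun y : R => 1 - y ^+ 2) (- (2 * x)).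
  by apply: is_derive_eq; rewrite add0r mul1r; change (x%:A) with (x * 1); ring.
have d_sqrt : is_derive x 1 (Num.sqrt \o (fun y : R => 1 - y ^+ 2)) ((2 * s)^-1 * - (2 * x)).
  by apply: is_derive1_comp => //; exact: is_derive1_sqrt.
have d_prod : is_derive x 1 (id * (Num.sqrt \o (fun y : R => 1 - y ^+ 2)))
    (x * ((2 * s)^-1 * - (2 * x)) + s).
  apply: is_derive_eq (is_deriveM (is_derive_id x 1) d_sqrt) _.
  by rewrite /= -[LHS]/(x * _ + _ * 1) mulr1.
apply: is_derive_eq (is_deriveD d_prod (is_derive1_asin x11)) _.
have s_neq0 := lt0r_neq0 s_gt0.
rewrite (_ : Num.sqrt _ = s) // (_ : x * _ = - (x ^+ 2) / s); last by field.
by rewrite (_ : x ^+ 2 = 1 - s ^+ 2); [field|rewrite s2; ring].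
Qed.

Lemma continuous_disk_section : continuous (fun x : R => 2 * Num.sqrt (1 - x ^+ 2)).
Proof.
move=> x; apply: cvgM; first exact: cvg_cst.
apply: (continuous_cvg _ (@sqrt_continuous R _)); apply: cvgB; first exact: cvg_cst.
by rewrite expr2; apply: cvgM; exact: cvg_id.
Qed.

Lemma integral_disk_section (a : R) : 0 < a < 1 ->
  (\int[lebesgue_measure]_(x in `[(- a)%R, a]) (2 * Num.sqrt (1 - x ^+ 2))%:E)%E =
  (disk_primitive a - disk_primitive (- a))%:E.
Proof.
move=> /andP[a0 a1].
have inner (x : R) : - a <= x <= a -> -1 < x < 1.
  by move=> /andP[? ?]; apply/andP; split; lra.
have cont (x : R) : - a <= x <= a -> {for x, continuous disk_primitive}.
  move=> /inner/is_derive_disk_primitive[dF _]; apply: differentiable_continuous.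
  exact/derivable1_diffP.
apply: continuous_FTC2; first lra.
- exact: continuous_subspaceT continuous_disk_section.
- split.
  + move=> x; rewrite in_itv /= => /andP[? ?].
    by have /is_derive_disk_primitive[] : -1 < x < 1 by apply: inner; apply/andP; split; lra.
  + by apply: cvg_at_right_filter; apply: cont; apply/andP; split; lra.
  + by apply: cvg_at_left_filter; apply: cont; apply/andP; split; lra.
- move=> x; rewrite in_itv /= => /andP[? ?].
  have /is_derive_disk_primitive[_ <-] : -1 < x < 1 by apply: inner; apply/andP; split; lra.
  by rewrite derive1E.
Qed.


Lemma integral_disk_section_le_leb2 (a : R) :
  (\int[lebesgue_measure]_(x in `[(- a)%R, a]) (2 * Num.sqrt (1 - x ^+ 2))%:E <=
   leb2 (@ball01 R))%E.
Proof.
rewrite /leb2 /product_measure1.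
under eq_integral => x _ do rewrite -lebesgue_xsection_ball01.
have := measurable_fun_xsection (@lebesgue_measure R) measurable_ball01.
by move=> ?; apply: ge0_subset_integral.
Qed.

Lemma leb2_ball01_ge_angle (th : R) :
  0 < th < pi / 2 -> ((2 * th)%:E <= leb2 (@ball01 R))%E.
Proof.
move=> /andP[th0 th1]; have pi0 := @pi_gt0 R; set a := sin th.
have asinK' (t : R) : - (pi / 2) <= t <= pi / 2 -> asin (sin t) = t.
  by move=> t_itv; apply: sinK; rewrite in_itv.
have asin_a : asin a = th by apply: asinK'; apply/andP; split; lra.
have asin_Na : asin (- a) = - th by rewrite -sinN asinK' //; apply/andP; split; lra.
have a0 : 0 < a by apply: sin_gt0_pi; apply/andP; split; lra.
have a1 : a < 1.
  rewrite lt_neqAle sin_le1 andbT; apply/eqP => a_eq1.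
  have pi2_itv : - (pi / 2) <= (pi / 2 : R) <= pi / 2 by apply/andP; split; lra.
  by move: asin_a; rewrite a_eq1 -[X in asin X]sin_pihalf asinK' //; lra.
apply: le_trans (integral_disk_section_le_leb2 a).
rewrite integral_disk_section; last by apply/andP.
rewrite lee_fin /disk_primitive asin_a asin_Na sqrrN.
have : 0 <= a * Num.sqrt (1 - a ^+ 2) by rewrite mulr_ge0 ?sqrtr_ge0 // ltW.
lra.
Qed.

Lemma pi_le_leb2_ball01 : (pi%:E <= leb2 (@ball01 R))%E.
Proof.
have pi0 := @pi_gt0 R.
apply/lee_mul01Pr; first by rewrite lee_fin ltW.
move=> r /andP[r0 r1]; rewrite -EFinM (_ : r * pi = 2 * (r * pi / 2)); last by field.
by apply: leb2_ball01_ge_angle; apply/andP; split; nra.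
Qed.

End disk_area.

Section pogorelov.
Context {R : realType} {K : nat} (d : 'I_K -> R * R) (v : 'I_K -> R).
Hypothesis K_gt0 : (0 < K)%N.
Implicit Types (x y z p w : R * R).
Local Notation phi := (pog_max d v).
Local Notation u := (legendre_dual d v).

Lemma pog_max_active y :
  exists2 j, phi y = dot y (d j) - v j & forall k, dot y (d k) - v k <= dot y (d j) - v j.
Proof.
pose a k := dot y (d k) - v k.
have [j _ aj_max] := arg_maxP a (isT : xpredT (Ordinal K_gt0)).
exists j; last by move=> k; exact: aj_max.
rewrite /pog_max.
suff -> : \big[Order.max/-oo%E]_(k < K) (dot y (d k) - v k)%:E = (a j)%:E by [].
apply/le_anti/andP; split; last exact: (le_bigmax _ (fun k => (a k)%:E) j).
by apply/bigmax_leP; split=> [|k _]; rewrite ?leNye // lee_fin; exact: aj_max.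
Qed.

Lemma pog_max_ge y k : dot y (d k) - v k <= phi y.
Proof. by have [j -> ] := pog_max_active y; apply. Qed.

Lemma has_sup_legendre x : has_sup [set dot x y - phi y | y in ball01].
Proof.
split; first by exists (dot x 0 - phi 0), 0 => //; rewrite /ball01 /=; lra.
pose k0 := Ordinal K_gt0; pose w := (x.1 - (d k0).1, x.2 - (d k0).2).
exists ((w.1 ^+ 2 + w.2 ^+ 2 + 1) / 2 + v k0) => _ [y yB <-].
have := pog_max_ge y k0; have := dot_le_sumsq w y.
by move: yB; rewrite /ball01 /dot /w /=; lra.
Qed.

Lemma legendre_dual_ge x y : ball01 y -> dot x y - phi y <= u x.
Proof. by move=> yB; apply: sup_upper_bound (has_sup_legendre x) _ _; exists y. Qed.

Lemma legendre_dual_le x M :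
  (forall y, ball01 y -> dot x y - phi y <= M) -> u x <= M.
Proof.
move=> le_M; apply: ge_sup; first exact: (has_sup_legendre x).1.
by move=> _ [y yB <-]; exact: le_M.
Qed.

Lemma convex2_legendre_dual : convex2 u.
Proof.
move=> x z t /andP[t0 t1]; apply: legendre_dual_le => y yB.
have := legendre_dual_ge x y yB; have := legendre_dual_ge z y yB.
have -> : dot ((1 - t) * x.1 + t * z.1, (1 - t) * x.2 + t * z.2) y - phi y
   = (1 - t) * (dot x y - phi y) + t * (dot z y - phi y) by rewrite /dot /=; ring.
by move=> uz ux; apply: lerD; apply: ler_wpM2l => //; lra.
Qed.

Lemma subgrad_legendre_dual {x p} : subgrad u x p -> ball01 p.
Proof.
move=> /(_ (x.1 + p.1, x.2 + p.2)).
have : u (x.1 + p.1, x.2 + p.2) <= u x + (p.1 ^+ 2 + p.2 ^+ 2 + 1) / 2.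
  apply: legendre_dual_le => y yB; have := legendre_dual_ge x y yB.
  by have := dot_le_sumsq p y; move: yB; rewrite /ball01 /dot /=; lra.
by rewrite /ball01 /dot /= (addrAC x.1) (addrAC x.2) !subrr !add0r; lra.
Qed.

Local Notation C := (pog_cell d v).

Lemma pog_cell_grad_unique {k y p} : C k y ->
  (forall w, \forall t \near 0^'+, phi y + t * dot p w <= phi (t *: w + y)) -> p = d k.
Proof.
move=> [_ [_ [dphi dphi_val]]] slope; apply: dot_le_eq => w.
by rewrite -dphi_val; exact: right_slope_le_diff.
Qed.

Lemma pog_cell_active {k y j} : C k y -> phi y = dot y (d j) - v j -> d j = d k.
Proof.
move=> yk phi_j; apply: (pog_cell_grad_unique yk) => w; apply: nearW => t.
by have := pog_max_ge (t *: w + y) j; rewrite phi_j dotDZl [dot (d j) w]dotC; lra.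
Qed.

Lemma legendre_dual_cell {k y} : C k y -> u (d k) = dot (d k) y - phi y.
Proof.
move=> yk; have [j phi_j _] := pog_max_active y.
have djk := pog_cell_active yk phi_j.
apply/le_anti/andP; split; last by apply: legendre_dual_ge; case: yk.
apply: legendre_dual_le => // z _; have := pog_max_ge z j.
by move: phi_j; rewrite djk /dot; lra.
Qed.

Lemma pog_cell_subgrad {k y} : C k y -> subgrad u (d k) y.
Proof.
move=> yk z; have := legendre_dual_ge z y (proj1 yk).
by rewrite (legendre_dual_cell yk) /dot /=; lra.
Qed.

Lemma pog_cell_subgrad_eq {k y x} : C k y -> subgrad u x y -> x = d k.
Proof.
(* With the Fenchel equality, [subgrad u x y] makes [x] a subgradient of [phi] at [y]. *)
move=> yk x_y; apply: (pog_cell_grad_unique yk) => w.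
have to_y : (fun t : R => t *: w + y) @ 0^'+ --> y.
  rewrite -[X in _ --> X]add0r -(scale0r w).
  apply: cvgD; last exact: cvg_cst.
  by apply: cvgZ; [exact: cvg_at_right_filter cvg_id|exact: cvg_cst].
have near_ball : \forall t \near 0^'+, ball01 (t *: w + y).
  exact: to_y _ (proj1 (proj2 yk)).
apply: filterS near_ball => t tB.
have := legendre_dual_ge x _ tB; have := x_y (d k).
rewrite (legendre_dual_cell yk) [dot x _]dotC dotDZl [dot w x]dotC /dot /=; lra.
Qed.

Lemma pog_cell_eq {i j y} : C i y -> C j y -> d i = d j.
Proof. by move=> yi yj; exact: pog_cell_subgrad_eq yj (pog_cell_subgrad yi). Qed.

Lemma near_ball01 y : y.1 ^+ 2 + y.2 ^+ 2 < 1 -> \forall z \near y, ball01 z.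
Proof.
have sumsq_cont : (fun z : R * R => z.1 ^+ 2 + z.2 ^+ 2) @ y --> y.1 ^+ 2 + y.2 ^+ 2.
  by apply: cvgD; rewrite !expr2; apply: cvgM; (exact: cvg_fst || exact: cvg_snd).
by move=> y_in; apply: filterS (cvgr_lt _ sumsq_cont _ y_in) => z /ltW.
Qed.

Lemma pog_max_near_active {y j} :
  phi y = dot y (d j) - v j ->
  (forall i, phi y = dot y (d i) - v i -> d i = d j) ->
  \forall z \near y, phi z = dot z (d j) - v j.
Proof.
move=> phi_j ties.
suff : \forall z \near y, forall i, dot z (d i) - v i <= dot z (d j) - v j.
  apply: filterS => z j_max; have [i -> i_max] := pog_max_active z.
  by apply/le_anti; rewrite j_max i_max.
apply: (@filter_forall _ _ (fun i z => dot z (d i) - v i <= dot z (d j) - v j)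
  (nbhs y) _) => i.
have := pog_max_ge y i; rewrite phi_j le_eqVlt.
case/predU1P => [ij_tie|ij_lt].
  have dij : d i = d j by apply: ties; rewrite phi_j ij_tie.
  have vij : v i = v j by move: ij_tie; rewrite dij; lra.
  by apply: nearW => z; rewrite dij vij.
have gap_cont : (fun z => (dot z (d j) - v j) - (dot z (d i) - v i)) @ y -->
    (dot y (d j) - v j) - (dot y (d i) - v i).
  by apply: cvgB; apply: cvgB; (exact: continuous_dotl || exact: cvg_cst).
by apply: filterS (cvgr_gt _ gap_cont 0 _) => [z|]; rewrite subr_gt0 // => /ltW.
Qed.

Lemma pog_cell_of_no_tie y : y.1 ^+ 2 + y.2 ^+ 2 < 1 ->
  (forall i j, phi y = dot y (d i) - v i -> phi y = dot y (d j) - v j -> d i = d j) ->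
  exists k, C k y.
Proof.
move=> y_in ties; have [j phi_j _] := pog_max_active y.
have near_phi := pog_max_near_active phi_j (fun i phi_i => ties i j phi_i phi_j).
have near_affine : \forall z \near y, phi z = dotl (d j) z + - v j by [].
have [dphi dphi_val] := near_affine_differentiable (continuous_dotl (d j)) near_affine.
by exists j; split; [rewrite /ball01; exact: ltW|split; [exact: near_ball01|]].
Qed.

Definition pog_ties : set (R * R) :=
  \big[setU/set0]_(ij : 'I_K * 'I_K | d ij.1 != d ij.2)
     [set y | dot y (d ij.1 - d ij.2) = v ij.1 - v ij.2].

Definition pog_exceptional : set (R * R) :=
  [set y | y.1 ^+ 2 + y.2 ^+ 2 = 1] `|` pog_ties.

Lemma negligible_pog_exceptional : leb2.-negligible pog_exceptional.
Proof.
have m_ties : measurable pog_ties.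
  by apply: bigsetU_measurable => ij _; exact: measurable_dot_level.
exists pog_exceptional; split => //; first exact: measurableU measurable_unit_circle m_ties.
apply/eqP; rewrite eq_le measure_ge0 andbT.
apply: le_trans; first by apply: measureU2; [exact: measurable_unit_circle|exact: m_ties].
rewrite [X in (X + _)%E](_ : _ = 0) ?add0e; last exact: leb2_unit_circle.
apply: le_trans; first exact: (le_measure_bigsetU (leb2_measure R)
  (fun ij _ => measurable_dot_level _ _)).
by rewrite big1 // => ij dij; apply: leb2_dot_level; rewrite subr_eq0.
Qed.

Lemma ball01_pog_cover {y} : ball01 y -> (exists k, C k y) \/ pog_exceptional y.
Proof.
move=> yB; have [y_on|y_in] := eqVneq (y.1 ^+ 2 + y.2 ^+ 2) 1; first by right; left.
have {}y_in : y.1 ^+ 2 + y.2 ^+ 2 < 1 by rewrite lt_neqAle y_in.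
have [[i [j [phi_i phi_j dij]]]|no_tie] := pselect (exists i j,
    [/\ phi y = dot y (d i) - v i, phi y = dot y (d j) - v j & d i != d j]).
  right; right; apply/in_bigsetU; exists (i, j) => //=.
  by move: phi_i phi_j; rewrite /dot /=; lra.
left; apply: pog_cell_of_no_tie => // i j phi_i phi_j.
by apply/eqP; apply: contra_notT no_tie => dij; exists i, j.
Qed.

Lemma pog_cells_sub_subgrad_img E :
  \big[setU/set0]_(k | d k \in E) C k `<=` subgrad_img u E.
Proof.
by move=> y /in_bigsetU[k kE yk]; exists (d k); [rewrite -in_setE|exact: pog_cell_subgrad].
Qed.

Lemma subgrad_img_sub_pog_cells E :
  subgrad_img u E `<=` \big[setU/set0]_(k | d k \in E) C k `|` pog_exceptional.
Proof.
move=> y [x Ex x_y].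
have [[k yk]|] := ball01_pog_cover (subgrad_legendre_dual x_y); last by right.
by left; apply/in_bigsetU; exists k => //; rewrite -(pog_cell_subgrad_eq yk x_y) in_setE.
Qed.

End pogorelov.

Section pogorelov_solution.
Context {R : realType} (K : nat) (d : 'I_K -> R * R) (alpha : 'I_K -> R)
  (v : 'I_K -> R).
Hypotheses (K_gt0 : (0 < K)%N) (alpha_gt0 : forall k, 0 < alpha k)
  (alpha_sum : \sum_(k < K) alpha k = pi) (pog : pogorelov_solution d alpha v).
Local Notation C := (pog_cell d v).
Local Notation M := (leb2_measure R).

Lemma pog_directions_injective : injective d.
Proof.
move=> i j dij; apply/eqP/negPn/negP => neq_ij.
have cover : ball01 `<=` \big[setU/set0]_(k | k != j) C k `|` pog_exceptional d v.
  move=> y /(ball01_pog_cover d v K_gt0)[[k yk]|]; last by right.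
  left; apply/in_bigsetU; have [kj|] := eqVneq k j; last by exists k.
  by exists i; rewrite // /pog_cell dij -kj.
have [G [mG CG] GM] := completion_measure_is_bigsetU_le M (fun k => k != j) pog.
have [N [mN N0 excN]] := negligible_pog_exceptional d v.
have : (pi%:E <= (\sum_(k | k != j) alpha k)%:E)%E.
  apply: le_trans pi_le_leb2_ball01 _.
  apply: le_trans; first apply: (le_measure M _ _ (subset_trans cover (setUSS CG excN))).
  - by rewrite inE; exact: measurable_ball01.
  - by rewrite inE; exact: measurableU.
  apply: le_trans; first exact: measureU2.
  by rewrite [X in (_ + X)%E](_ : _ = 0) ?adde0 -?sumEFin.
rewrite lee_fin -alpha_sum (bigD1 j) //=.
by have := alpha_gt0 j; lra.
Qed.

Lemma subgrad_img_measure E :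
  leb2_measure_is (subgrad_img (legendre_dual d v) E) (mu_disc d alpha E).
Proof.
have -> : mu_disc d alpha E = (\sum_(k | d k \in E) (alpha k)%:E)%E.
  rewrite /mu_disc [RHS]big_mkcond; apply: eq_bigr => k _.
  by rewrite diracE; case: (d k \in E); rewrite ?mule1 ?mule0.
apply: (completion_measure_is_negligible_ext M _ (negligible_pog_exceptional d v)
  (pog_cells_sub_subgrad_img d v K_gt0 E) (subgrad_img_sub_pog_cells d v K_gt0 E)).
apply: (completion_measure_is_bigsetU M) => // i j _ _ [y [yi yj]].
exact/pog_directions_injective/(pog_cell_eq d v K_gt0 yi yj).
Qed.

End pogorelov_solution.

Theorem lemma2p4 (R : realType) (K : nat) (d : 'I_K -> R * R)
  (alpha : 'I_K -> R) (v : 'I_K -> R) :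
  (0 < K)%N ->
  (forall k, 0 < alpha k) ->
  \sum_(k < K) alpha k = pi ->
  pogorelov_solution d alpha v ->
  aleksandrov_solution d alpha (legendre_dual d v).
Proof.
move=> K_gt0 alpha_gt0 alpha_sum pog; split.
- exact: convex2_legendre_dual.
- by move=> p [x _]; exact: subgrad_legendre_dual.
- by move=> E _; exact: subgrad_img_measure.
Qed.
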